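(* Let $I\subset\mathbb{R}$ be an interval, let $a,b,c,d,f,g:I\to\mathbb{R}$ be given with $a(t)\neq0$ on $I$, and let $b_1,b_2$ be real constants. Suppose $\mu>0,\alpha,\beta,\gamma,\delta,\varepsilon,\kappa$ are differentiable functions on $I$ satisfying $$\alpha'+b=2c\alpha+4a\alpha^2,\quad \beta'=(c+4a\alpha)\beta,\quad \gamma'=a\beta^2,$$ $$\delta'+2\alpha g=(c+4a\alpha)\delta+f,\quad \varepsilon'=(2a\delta-g)\beta,\quad \kappa'=a\delta^2-g\delta,$$ and $\alpha=-\dfrac{\mu'}{4a\mu}-\dfrac{d}{2a}$. Let $S(x,t)=\alpha(t)x^2+\delta(t)x+\kappa(t)$ and define $$h_1=a\beta^2\mu e^{-2S},\quad L_1=-b_1a\beta^2,\quad M_i=b_ia\beta^2\mu^{-1/2}e^{S}\ (i=1,2).$$ If $u(\xi,\tau),v(\xi,\tau)$ solve the Gray–Scott-type system $$u_\tau=u_{\xi\xi}-uv^2+b_1(1-u),\qquad v_\tau=v_{\xi\xi}+uv^2-b_1v+b_2,$$ then $\psi=\mu^{-1/2}e^{S}u(\xi,\tau)$, $\varphi=\mu^{-1/2}e^{S}v(\xi,\tau)$, with $\xi=\beta(t)x+\varepsilon(t)$, $\tau=\gamma(t)$, solve $$\psi_t=a\psi_{xx}-(bx^2-d-L_1-xf)\psi-(g-cx)\psi_x-h_1\psi\varphi^2+M_1,$$ $$\varphi_t=a\varphi_{xx}-(bx^2-d-L_1-xf)\varphi-(g-cx)\varphi_x+h_1\psi\varphi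^2+M_2.$$
   Context: All functions are real-valued; primes denote derivatives with respect to $t$. *)

From Stdlib Require Import Reals.
From Coquelicot Require Import Coquelicot.
Open Scope R_scope.

Definition is_interval (I : R -> Prop) : Prop :=
  forall x y z, I x -> I z -> x <= y -> y <= z -> I y.

Definition pd1 (u : R -> R -> R) (x t : R) : R := Derive (fun z => u z t) x.
Definition pd2 (u : R -> R -> R) (x t : R) : R := Derive (fun s => u x s) t.
Definition pd11 (u : R -> R -> R) (x t : R) : R := Derive (fun z => pd1 u z t) x.

Definition regular_at (u : R -> R -> R) (x t : R) : Prop :=
  differentiable_pt_lim u x t (pd1 u x t) (pd2 u x t) /\
  ex_derive (fun z => pd1 u z t) x.

(* The substitution psi = mu^(-1/2) e^S u(beta x + eps, gamma) is a gauge transformation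
   composed with an affine change of variables.  Differentiating it, the equations for
   alpha, ..., kappa and the relation between alpha and mu are exactly what makes the
   x^2, x and constant terms cancel, leaving
     psi_t - a psi_xx + (b x^2 - d - x f) psi + (g - c x) psi_x
       = a beta^2 mu^(-1/2) e^S (u_tau - u_xixi).
   The Gray-Scott reaction terms then carry over: the linear ones give L1 psi and the
   sources M_i, and the cubic one gives h1 psi phi^2 because
   mu^(-1/2) e^S u v^2 = mu e^(-2S) psi phi^2. *)

From Stdlib Require Import Reals Lra.
From Coquelicot Require Import Coquelicot.
Open Scope R_scope.

Lemma is_derive_eq (f : R -> R) (x l l' : R) :
  is_derive f x l -> l = l' -> is_derive f x l'.
Proof. now intros H <-. Qed.

Lemma is_derive_comp_2d (w : R -> R -> R) (p q : R -> R) (s l1 l2 dp dq : R) :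
  differentiable_pt_lim w (p s) (q s) l1 l2 ->
  is_derive p s dp -> is_derive q s dq ->
  is_derive (fun r => w (p r) (q r)) s (l1 * dp + l2 * dq).
Proof.
  intros Hw Hp Hq.
  apply is_derive_Reals, derivable_pt_lim_comp_2d; [exact Hw | apply is_derive_Reals ..]; assumption.
Qed.

Lemma differentiable_pt_lim_is_derive_l (w : R -> R -> R) (x y l1 l2 : R) :
  differentiable_pt_lim w x y l1 l2 -> is_derive (fun z => w z y) x l1.
Proof.
  intros Hw. apply is_derive_eq with (l1 * 1 + l2 * 0); [| ring].
  apply (is_derive_comp_2d w (fun z => z) (fun _ => y)); [exact Hw | auto_derive; auto ..].
Qed.

Lemma cubic_gauge_covariant (m s p q : R) : 0 < m ->
  / sqrt m * exp s * (p * q ^ 2)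
  = m * exp (- (2 * s)) * (/ sqrt m * exp s * p) * (/ sqrt m * exp s * q) ^ 2.
Proof.
  intros Hm.
  assert (Hsqrt : sqrt m * sqrt m = m) by (apply sqrt_sqrt; lra).
  assert (Hs : sqrt m <> 0) by (apply Rgt_not_eq, sqrt_lt_R0; lra).
  assert (He : exp s <> 0) by apply Rgt_not_eq, exp_pos.
  replace (- (2 * s)) with (- (s + s)) by ring.
  rewrite exp_Ropp, exp_plus.
  rewrite <- Hsqrt at 2.
  field. auto.
Qed.

Section Gauge.

Variables (mu alpha beta gamma delta eps kappa : R -> R) (w : R -> R -> R).

Definition phase (x t : R) : R := alpha t * x ^ 2 + delta t * x + kappa t.

Definition gauge (x t : R) : R :=
  / sqrt (mu t) * exp (phase x t) * w (beta t * x + eps t) (gamma t).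

Variable t : R.

Hypothesis w_regular : forall y, regular_at w (beta t * y + eps t) (gamma t).

Local Notation xi y := (beta t * y + eps t).
Local Notation tau := (gamma t).
Local Notation weight y := (/ sqrt (mu t) * exp (phase y t)).

Lemma is_derive_gauge_x (y : R) :
  is_derive (fun z => gauge z t) y
    (weight y * ((2 * alpha t * y + delta t) * w (xi y) tau + beta t * pd1 w (xi y) tau)).
Proof.
  pose proof (differentiable_pt_lim_is_derive_l _ _ _ _ _ (proj1 (w_regular y))) as Hw.
  unfold gauge, phase, pd1. auto_derive.
  - eexists; exact Hw.
  - simpl. ring.
Qed.

Lemma pd1_gauge (y : R) :
  pd1 gauge y t
  = weight y * ((2 * alpha t * y + delta t) * w (xi y) tau + beta t * pd1 w (xi y) tau).
Proof. exact (is_derive_unique _ _ _ (is_derive_gauge_x y)). Qed.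

Lemma is_derive_pd1_gauge (x : R) :
  is_derive (fun z => pd1 gauge z t) x
    (weight x * (((2 * alpha t * x + delta t) ^ 2 + 2 * alpha t) * w (xi x) tau
                 + 2 * (2 * alpha t * x + delta t) * beta t * pd1 w (xi x) tau
                 + beta t ^ 2 * pd11 w (xi x) tau)).
Proof.
  apply (is_derive_ext (fun z => weight z
    * ((2 * alpha t * z + delta t) * w (xi z) tau + beta t * pd1 w (xi z) tau))).
  { intro z. symmetry. apply pd1_gauge. }
  destruct (w_regular x) as [Hw1 Hw2].
  pose proof (differentiable_pt_lim_is_derive_l _ _ _ _ _ Hw1) as Hw.
  unfold phase, pd11, pd1 in *. auto_derive.
  - split; [eexists; exact Hw | split; [exact Hw2 | exact I]].
  - simpl. ring.
Qed.

Lemma pd11_gauge (x : R) :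
  pd11 gauge x t
  = weight x * (((2 * alpha t * x + delta t) ^ 2 + 2 * alpha t) * w (xi x) tau
                + 2 * (2 * alpha t * x + delta t) * beta t * pd1 w (xi x) tau
                + beta t ^ 2 * pd11 w (xi x) tau).
Proof. exact (is_derive_unique _ _ _ (is_derive_pd1_gauge x)). Qed.

Hypotheses (mu_pos : 0 < mu t)
  (mu_derivable : ex_derive mu t) (alpha_derivable : ex_derive alpha t)
  (beta_derivable : ex_derive beta t) (gamma_derivable : ex_derive gamma t)
  (delta_derivable : ex_derive delta t) (eps_derivable : ex_derive eps t)
  (kappa_derivable : ex_derive kappa t).

Lemma is_derive_gauge_t (x : R) :
  is_derive (fun s => gauge x s) t
    (weight x * ((- Derive mu t / (2 * mu t) + Derive alpha t * x ^ 2
                  + Derive delta t * x + Derive kappa t) * w (xi x) tau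
                 + (Derive beta t * x + Derive eps t) * pd1 w (xi x) tau
                 + Derive gamma t * pd2 w (xi x) tau)).
Proof.
  assert (Hweight : is_derive (fun s => / sqrt (mu s) * exp (phase x s)) t
    (weight x * (- Derive mu t / (2 * mu t) + Derive alpha t * x ^ 2
                 + Derive delta t * x + Derive kappa t))).
  { assert (Hsqrt : sqrt (mu t) * sqrt (mu t) = mu t) by (apply sqrt_sqrt; lra).
    assert (Hs : 0 < sqrt (mu t)) by now apply sqrt_lt_R0.
    unfold phase. auto_derive.
    - repeat split; auto; lra.
    (* auto_derive differentiates the eta-expanded coefficient functions. *)
    - change (fun s => mu s) with mu; change (fun s => alpha s) with alpha;
      change (fun s => delta s) with delta; change (fun s => kappa s) with kappa.
      set (s := sqrt (mu t)) in *. clearbody s. rewrite <- Hsqrt. cbn [pow]. field. lra. }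
  assert (Hw : is_derive (fun s => w (beta s * x + eps s) (gamma s)) t
    (pd1 w (xi x) tau * (Derive beta t * x + Derive eps t) + pd2 w (xi x) tau * Derive gamma t)).
  { apply is_derive_comp_2d; [apply w_regular | auto_derive; auto ..]; now rewrite !Rmult_1_l. }
  apply is_derive_eq with (1 := is_derive_mult _ _ _ _ _ Hweight Hw Rmult_comm).
  cbv [plus mult]; simpl. ring.
Qed.

Variables a b c d f g : R -> R.

Hypotheses (a_neq0 : a t <> 0)
  (alpha_ode : Derive alpha t + b t = 2 * c t * alpha t + 4 * a t * alpha t ^ 2)
  (beta_ode : Derive beta t = (c t + 4 * a t * alpha t) * beta t)
  (gamma_ode : Derive gamma t = a t * beta t ^ 2)
  (delta_ode : Derive delta t + 2 * alpha t * g t = (c t + 4 * a t * alpha t) * delta t + f t)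
  (eps_ode : Derive eps t = (2 * a t * delta t - g t) * beta t)
  (kappa_ode : Derive kappa t = a t * delta t ^ 2 - g t * delta t)
  (alpha_mu : alpha t = - (Derive mu t / (4 * a t * mu t)) - d t / (2 * a t)).

Lemma gauge_transport (x : R) :
  is_derive (fun s => gauge x s) t
    (a t * pd11 gauge x t - (b t * x ^ 2 - d t - x * f t) * gauge x t
     - (g t - c t * x) * pd1 gauge x t
     + a t * beta t ^ 2 * weight x * (pd2 w (xi x) tau - pd11 w (xi x) tau)).
Proof.
  apply is_derive_eq with (1 := is_derive_gauge_t x).
  assert (Dmu : Derive mu t = - (4 * a t * mu t * alpha t) - 2 * mu t * d t).
  { rewrite alpha_mu. field. split; [exact a_neq0 | lra]. }
  assert (Dalpha : Derive alpha t = 2 * c t * alpha t + 4 * a t * alpha t ^ 2 - b t) by lra.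
  assert (Ddelta : Derive delta t
                   = (c t + 4 * a t * alpha t) * delta t + f t - 2 * alpha t * g t) by lra.
  rewrite pd1_gauge, pd11_gauge.
  unfold gauge.
  rewrite Dmu, Dalpha, Ddelta, beta_ode, gamma_ode, eps_ode, kappa_ode.
  field. split; [apply Rgt_not_eq, sqrt_lt_R0 |]; lra.
Qed.

End Gauge.

Theorem theorem4
  (I : R -> Prop) (HI : is_interval I)
  (a b c d f g : R -> R) (b1 b2 : R)
  (mu alpha beta gamma delta eps kappa : R -> R)
  (u v : R -> R -> R)
  (Ha : forall t, I t -> a t <> 0)
  (Hmu : forall t, I t -> 0 < mu t)
  (Hdiff : forall t, I t ->
     ex_derive mu t /\ ex_derive alpha t /\ ex_derive beta t /\ ex_derive gamma t /\
     ex_derive delta t /\ ex_derive eps t /\ ex_derive kappa t)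
  (Halpha : forall t, I t ->
     Derive alpha t + b t = 2 * c t * alpha t + 4 * a t * (alpha t) ^ 2)
  (Hbeta : forall t, I t ->
     Derive beta t = (c t + 4 * a t * alpha t) * beta t)
  (Hgamma : forall t, I t -> Derive gamma t = a t * (beta t) ^ 2)
  (Hdelta : forall t, I t ->
     Derive delta t + 2 * alpha t * g t = (c t + 4 * a t * alpha t) * delta t + f t)
  (Heps : forall t, I t -> Derive eps t = (2 * a t * delta t - g t) * beta t)
  (Hkappa : forall t, I t -> Derive kappa t = a t * (delta t) ^ 2 - g t * delta t)
  (Halpha_mu : forall t, I t ->
     alpha t = - (Derive mu t / (4 * a t * mu t)) - d t / (2 * a t))
  (* u, v solve the Gray-Scott-type system at every point (xi, tau) =
     (beta t * x + eps t, gamma t), t in I, x real *)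
  (Hu : forall x t, I t ->
     regular_at u (beta t * x + eps t) (gamma t) /\
     pd2 u (beta t * x + eps t) (gamma t) =
       pd11 u (beta t * x + eps t) (gamma t)
       - u (beta t * x + eps t) (gamma t) * (v (beta t * x + eps t) (gamma t)) ^ 2
       + b1 * (1 - u (beta t * x + eps t) (gamma t)))
  (Hv : forall x t, I t ->
     regular_at v (beta t * x + eps t) (gamma t) /\
     pd2 v (beta t * x + eps t) (gamma t) =
       pd11 v (beta t * x + eps t) (gamma t)
       + u (beta t * x + eps t) (gamma t) * (v (beta t * x + eps t) (gamma t)) ^ 2
       - b1 * v (beta t * x + eps t) (gamma t) + b2) :
  let S := fun x t => alpha t * x ^ 2 + delta t * x + kappa t in
  let h1 := fun x t => a t * (beta t) ^ 2 * mu t * exp (- (2 * S x t)) in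
  let L1 := fun t => - (b1 * a t * (beta t) ^ 2) in
  let M1 := fun x t => b1 * a t * (beta t) ^ 2 * / sqrt (mu t) * exp (S x t) in
  let M2 := fun x t => b2 * a t * (beta t) ^ 2 * / sqrt (mu t) * exp (S x t) in
  let psi := fun x t => / sqrt (mu t) * exp (S x t) * u (beta t * x + eps t) (gamma t) in
  let phi := fun x t => / sqrt (mu t) * exp (S x t) * v (beta t * x + eps t) (gamma t) in
  forall x t, I t ->
    ex_derive (fun y => psi y t) x /\ ex_derive (fun y => pd1 psi y t) x /\
    is_derive (fun s => psi x s) t
      (a t * pd11 psi x t
       - (b t * x ^ 2 - d t - L1 t - x * f t) * psi x t
       - (g t - c t * x) * pd1 psi x t
       - h1 x t * psi x t * (phi x t) ^ 2 + M1 x t) /\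
    ex_derive (fun y => phi y t) x /\ ex_derive (fun y => pd1 phi y t) x /\
    is_derive (fun s => phi x s) t
      (a t * pd11 phi x t
       - (b t * x ^ 2 - d t - L1 t - x * f t) * phi x t
       - (g t - c t * x) * pd1 phi x t
       + h1 x t * psi x t * (phi x t) ^ 2 + M2 x t).
Proof.
  (* Everything is pointwise in t. *)
  intros S h1 L1 M1 M2 psi phi x t Ht.
  change psi with (gauge mu alpha beta gamma delta eps kappa u).
  change phi with (gauge mu alpha beta gamma delta eps kappa v).
  destruct (Hdiff t Ht) as (Dmu & Dalpha & Dbeta & Dgamma & Ddelta & Deps & Dkappa).
  assert (Ru : forall y, regular_at u (beta t * y + eps t) (gamma t)) by (intro; apply Hu, Ht).
  assert (Rv : forall y, regular_at v (beta t * y + eps t) (gamma t)) by (intro; apply Hv, Ht).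
  pose proof (fun w Rw => gauge_transport mu alpha beta gamma delta eps kappa w t Rw (Hmu t Ht)
    Dmu Dalpha Dbeta Dgamma Ddelta Deps Dkappa a b c d f g (Ha t Ht) (Halpha t Ht) (Hbeta t Ht)
    (Hgamma t Ht) (Hdelta t Ht) (Heps t Ht) (Hkappa t Ht) (Halpha_mu t Ht) x) as transport.
  pose proof (cubic_gauge_covariant (mu t) (S x t) (u (beta t * x + eps t) (gamma t))
    (v (beta t * x + eps t) (gamma t)) (Hmu t Ht)) as cubic.
  apply (f_equal (Rmult (a t * beta t ^ 2))) in cubic.
  destruct (Hu x t Ht) as [_ Pu], (Hv x t Ht) as [_ Pv].
  refine (conj _ (conj _ (conj _ (conj _ (conj _ _))))).
  - eexists. apply (is_derive_gauge_x _ _ _ _ _ _ _ _ _ Ru).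
  - eexists. apply (is_derive_pd1_gauge _ _ _ _ _ _ _ _ _ Ru).
  - apply is_derive_eq with (1 := transport u Ru).
    rewrite Pu. unfold h1, L1, M1, gauge, phase, S in *. lra.
  - eexists. apply (is_derive_gauge_x _ _ _ _ _ _ _ _ _ Rv).
  - eexists. apply (is_derive_pd1_gauge _ _ _ _ _ _ _ _ _ Rv).
  - apply is_derive_eq with (1 := transport v Rv).
    rewrite Pv. unfold h1, L1, M2, gauge, phase, S in *. lra.
Qed.
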